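(* Let $G$ be a loopless multigraph and $k\ge 1$ an integer with $k \geq \Delta^{\mu}(G)-1$. If $G^*$ has no cycle of length greater than $2$ (equivalently, merging parallel edges of $G^*$ yields a forest), then $G$ is $k$-edge-colorable.
   Context: $d(v)$ is the degree of $v$ in $G$ (counting multiplicities), $\mu(v,w)$ is the number of edges joining $v,w$, $\mu(v)=\max_w \mu(v,w)$, and $\Delta^{\mu}(G)=\max_{v\in V(G)}[d(v)+\mu(v)]$. $G^*$ is the subgraph of $G$ induced by all vertices $v$ with $d(v)+\mu(v)=\Delta^{\mu}(G)$. $k$-edge-colorable means there is an assignment of colors from $\{1,\dots,k\}$ to edges so that distinct edges sharing an endpoint get distinct colors. *)

From mathcomp Require Import all_boot.
Set Implicit Arguments. Unset Strict Implicit. Unset Printing Implicit Defensive.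

(* A multigraph on vertex set V with edge set E: each edge e has endpoints
   (ends e).1 and (ends e).2.  Parallel edges = distinct edges with the same
   endpoint pair. *)
Section MG.
Variables (V E : finType) (ends : E -> V * V).

Definition loopless : Prop := forall e : E, (ends e).1 != (ends e).2.

Definition incident (v : V) (e : E) : bool := ((ends e).1 == v) || ((ends e).2 == v).

Definition deg (v : V) : nat := #|[set e : E | incident v e]|.

Definition mult (v w : V) : nat :=
  #|[set e : E | (((ends e).1 == v) && ((ends e).2 == w))
              || (((ends e).1 == w) && ((ends e).2 == v))]|.

Definition mult_max (v : V) : nat := \max_(w : V) mult v w.

Definition Delta_mu : nat := \max_(v : V) (deg v + mult_max v).

Definition in_Gstar (v : V) : bool := deg v + mult_max v == Delta_mu.

Definition Gstar_adj : rel V :=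
  fun v w => [&& in_Gstar v, in_Gstar w & 0 < mult v w].

Definition Gstar_no_long_cycle : Prop :=
  ~ exists s : seq V, [/\ uniq s, 3 <= size s & cycle Gstar_adj s].

(* k-edge-colorability: colors are 'I_k (i.e. {1,...,k} shifted by one);
   distinct edges sharing an endpoint get distinct colors. *)
Definition edge_colorable (k : nat) : Prop :=
  exists c : E -> 'I_k,
    forall e f : E, e != f -> (exists v : V, incident v e && incident v f) ->
      c e != c f.
End MG.

(* Induction on the edge set, keeping the invariant that every vertex has
   d + mu <= k + 1 and that tight vertices (d + mu = k + 1) adjacent in the
   current graph are adjacent in G^*, so that tight vertices span a forest.
   Remove an edge e at a vertex x that is a leaf of this forest (or at any
   vertex if there is no tight vertex), color the rest, and suppose e cannot be
   colored.  Recoloring along Vizing's fan at x and swapping Kempe chains show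
   that no color is missing both at x and at a fan vertex, and that distinct
   fan vertices miss disjoint sets of colors.  So the colors missing at fan
   vertices inject into the edges from x to the fan.  But a fan vertex z misses
   at least mu'(x, z) colors, two more if z is the other end of e, and one less
   only if z is tight and adjacent to x, which happens at most once since x is
   a leaf.  Summing over the fan gives a contradiction. *)

From mathcomp Require Import all_boot perm zify.
From Stdlib Require Import Classical_Prop.
Set Implicit Arguments. Unset Strict Implicit. Unset Printing Implicit Defensive.

Lemma connect_closed (T : finType) (e : rel T) (P : pred T) x y :
  (forall u v, P u -> e u v -> P v) -> P x -> connect e x y -> P y.
Proof.
move=> clP Px /connectP [p ep ->].
elim: p x Px ep => [|z p IHp] x Px //= /andP [exz ep].
exact: IHp (clP _ _ Px exz) ep.
Qed.

Lemma order_dvdn_iter (T : finType) (f : T -> T) x n :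
  injective f -> iter n f x = x -> order f x %| n.
Proof.
move=> f_inj fnx; have o_gt0 : 0 < order f x by rewrite -orderSpred.
have iter_mul m : iter (m * order f x) f x = x.
  by elim: m => // m IHm; rewrite mulSn iterD IHm iter_order.
have : iter (n %% order f x) f x = x.
  by move: fnx; rewrite {1}(divn_eq n (order f x)) addnC iterD iter_mul.
move/(congr1 (findex f x)); rewrite findex_iter ?ltn_pmod // findex0.
by move=> /eqP; rewrite -/(dvdn _ _).
Qed.

Section TwoInvolutions.
Variables (T : finType) (sa sb : T -> T) (R : rel T) (x : T).
Hypotheses (saK : involutive sa) (sbK : involutive sb) (sbx : sb x = x).
Hypothesis R_sub : forall u w, R u w -> w = sa u \/ w = sb u.

Let rho v := sb (sa v).

Let rho_inj : injective rho.
Proof. by move=> u v /(inv_inj sbK) /(inv_inj saK). Qed.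

Let iter_rho_sa i : iter i.+1 rho (sa (iter i rho x)) = x.
Proof.
have rho_sa v : rho (sa (rho v)) = sa v by rewrite /rho saK sbK.
have iter_sa j v : iter j rho (sa (iter j rho v)) = sa v.
  by elim: j => // j IHj; rewrite iterSr iterS rho_sa.
by rewrite iterS iter_sa /rho saK sbx.
Qed.

Let connect_orbit w : connect R x w -> fconnect rho x w.
Proof.
apply: connect_closed (connect0 _ x) => u w' /iter_findex <-.
set i := findex _ _ _.
have orbit_sa : fconnect rho x (sa (iter i rho x)).
  by rewrite fconnect_sym //; have := fconnect_iter rho i.+1 (sa (iter i rho x));
     rewrite iter_rho_sa.
case/R_sub => ->; first exact: orbit_sa.
have -> : sb (iter i rho x) = rho (sa (iter i rho x)) by rewrite /rho saK.
exact: connect_trans orbit_sa (fconnect1 _ _).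
Qed.

(* An [sa]-fixed point at distance [j] from [x] closes the orbit after [2j+1] steps. *)
Let order_orbit_fixpoint w :
  fconnect rho x w -> sa w = w -> order rho x = (findex rho x w).*2.+1.
Proof.
move=> xw saw; have j_lt := findex_max xw; set j := findex rho x w in j_lt *.
have {}saw : sa (iter j rho x) = iter j rho x by rewrite /j iter_findex.
have /(order_dvdn_iter rho_inj) /dvdnP [q Hq] : iter (j.+1 + j) rho x = x.
  by rewrite iterD -{1}saw iter_rho_sa.
have q1 : q = 1.
  have : q * order rho x < 2 * order rho x by nia.
  by rewrite ltn_pmul2r ?(leq_ltn_trans _ j_lt) //; case: q Hq => [|[|q]].
by rewrite -addnn -addSn Hq q1 mul1n.
Qed.

Lemma connect_involutions_fixpoint_uniq y z :
  connect R x y -> connect R x z -> sa y = y -> sa z = z -> y = z.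
Proof.
move=> /connect_orbit xy /connect_orbit xz say saz.
have := order_orbit_fixpoint xy say; rewrite (order_orbit_fixpoint xz saz).
move=> /eqP; rewrite eqSS -!muln2 eqn_pmul2r // => /eqP eq_findex.
by rewrite -(iter_findex xy) -(iter_findex xz) eq_findex.
Qed.

End TwoInvolutions.

Lemma path_chord_cycle (T : eqType) (R : rel T) v p u :
  symmetric R -> uniq (v :: p) -> path R v p -> R v u -> u \in p -> u != head v p ->
  exists s, [/\ uniq s, 3 <= size s & cycle R s].
Proof.
move=> Rsym + + Rvu up; case/splitPr: up => p1 p2.
case: p1 => [|a p1] vp_uniq vp_path; first by rewrite /= eqxx.
have split_p : (a :: p1) ++ u :: p2 = (a :: rcons p1 u) ++ p2 by rewrite /= -cat_rcons.
move=> _; exists (v :: a :: rcons p1 u); split.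
- by move: vp_uniq; rewrite -[v :: _]cat1s split_p catA cat_uniq => /andP [].
- by rewrite /= size_rcons.
- rewrite /cycle rcons_path -rcons_cons last_rcons Rsym Rvu andbT.
  by move: vp_path; rewrite split_p cat_path => /andP [].
Qed.

Lemma acyclic_leaf (T : finType) (R : rel T) (t0 : T) :
  symmetric R -> irreflexive R ->
  ~ (exists s : seq T, [/\ uniq s, 3 <= size s & cycle R s]) ->
  exists v, (v = t0 \/ exists w, R v w) /\
            (forall u1 u2, R v u1 -> R v u2 -> u1 = u2).
Proof.
move=> Rsym Rirr no_cycle.
pose has_leaf := exists v, (v = t0 \/ exists w, R v w) /\
                           (forall u1 u2, R v u1 -> R v u2 -> u1 = u2).
have size_le (s : seq T) : uniq s -> size s <= #|T|.
  by move=> s_uniq; rewrite -(card_uniqP s_uniq) max_card.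
(* Grow a simple path backwards from [t0]; a second neighbour on the path closes a cycle. *)
suff walk n v p :
    uniq (v :: p) -> path R v p -> last v p = t0 -> #|T| - size p <= n -> has_leaf.
  by apply: (walk #|T| t0 [::]); rewrite ?subn0.
elim: n v p => [|n IHn] v p vp_uniq vp_path vp_last p_size.
  by move: p_size; rewrite leqn0 subn_eq0 leqNgt; have := size_le _ vp_uniq => /= ->.
case: (boolP [forall u1, forall u2, R v u1 ==> R v u2 ==> (u1 == u2)]) => [leaf|].
  exists v; split.
    case: p vp_path vp_last {vp_uniq p_size} => [|a p] /=; first by left.
    by case/andP => Rva _ _; right; exists a.
  move=> u1 u2 R1 R2; apply/eqP.
  by move/forallP: leaf => /(_ u1) /forallP /(_ u2); rewrite R1 R2.
move=> /forallPn [u1] /forallPn [u2]; rewrite !negb_imply => /and3P [R1 R2 u12].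
have extend u : R v u -> u \notin v :: p -> has_leaf.
  move=> Rvu u_new; apply: (IHn u (v :: p)) => //=; first by rewrite u_new.
    by rewrite Rsym Rvu.
  by rewrite subnS; move: p_size; case: (#|T| - size p).
case u1p : (u1 \in v :: p); last by apply: (extend u1); rewrite ?u1p.
case u2p : (u2 \in v :: p); last by apply: (extend u2); rewrite ?u2p.
exfalso; apply: no_cycle.
have u1v : u1 != v by apply: contraTneq R1 => ->; rewrite Rirr.
have u2v : u2 != v by apply: contraTneq R2 => ->; rewrite Rirr.
rewrite !inE (negPf u1v) (negPf u2v) /= in u1p u2p.
case: (eqVneq u1 (head v p)) => [u1h | u1h].
  by apply: (path_chord_cycle Rsym vp_uniq vp_path R2 u2p); rewrite -u1h eq_sym.
exact: (path_chord_cycle Rsym vp_uniq vp_path R1 u1p).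
Qed.

Lemma card_dep_pairs (T1 T2 : finType) (P : pred T1) (Q : T1 -> {set T2}) :
  #|[set p : T1 * T2 | P p.1 && (p.2 \in Q p.1)]| = \sum_(a | P a) #|Q a|.
Proof.
rewrite -sum1_card (eq_bigr (fun a => \sum_(b in Q a) 1)) => [|a _]; last first.
  by rewrite -sum1_card.
by rewrite pair_big_dep; apply: eq_bigl => p; rewrite inE.
Qed.

Lemma sum_indicator_le1 (T : finType) (P Q : pred T) :
  (forall z1 z2, Q z1 -> Q z2 -> z1 = z2) -> \sum_(z | P z) (Q z : nat) <= 1.
Proof.
move=> Q_uniq; case: (pickP [pred z | P z && Q z]) => [z0 /andP [Pz0 Qz0] | noPQ].
  rewrite (bigD1 z0) //= big1 ?Qz0 // => z /andP [Pz zz0].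
  by case Qz: (Q z); rewrite // (Q_uniq z z0 Qz Qz0) eqxx in zz0.
by rewrite big1 // => z Pz; move: (noPQ z); rewrite /= Pz; case: (Q z).
Qed.

Lemma sub_path_belast (T : Type) (r1 r2 : rel T) (P Q : pred T) x s :
  (forall u w, P u -> Q w -> r1 u w -> r2 u w) ->
  all P (belast x s) -> all Q s -> path r1 x s -> path r2 x s.
Proof.
move=> r12; elim: s x => [|y s IHs] x //= /andP [Px Ps] /andP [Qy Qs] /andP [r1xy ys].
by rewrite (r12 _ _ Px Qy r1xy) IHs.
Qed.

Section EdgeColoring.
Variables (V E : finType) (ends : E -> V * V) (k : nat).
Hypothesis ends_loopless : loopless ends.

Local Notation inc := (incident ends).

Definition joins (f : E) (u w : V) : bool :=
  (((ends f).1 == u) && ((ends f).2 == w)) || (((ends f).1 == w) && ((ends f).2 == u)).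

Definition other_end (f : E) (v : V) : V :=
  if (ends f).1 == v then (ends f).2 else (ends f).1.

Definition proper_coloring (S : {set E}) (phi : E -> 'I_k) : Prop :=
  forall f g v, f \in S -> g \in S -> inc v f -> inc v g -> phi f = phi g -> f = g.

Definition colors_at (S : {set E}) (phi : E -> 'I_k) (v : V) : {set 'I_k} :=
  phi @: [set f in S | inc v f].

Definition deg_in (S : {set E}) (v : V) : nat := #|[set f in S | inc v f]|.
Definition mult_in (S : {set E}) (v w : V) : nat := #|[set f in S | joins f v w]|.
Definition mult_max_in (S : {set E}) (v : V) : nat := \max_(w : V) mult_in S v w.

Lemma joinsC f u w : joins f u w = joins f w u.
Proof. by rewrite /joins orbC. Qed.

Lemma joins_incl f u w : joins f u w -> inc u f.
Proof.
by rewrite /joins /incident => /orP [] /andP [] /eqP -> /eqP ->; rewrite eqxx ?orbT.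
Qed.

Lemma joins_incr f u w : joins f u w -> inc w f.
Proof. by rewrite joinsC; apply: joins_incl. Qed.

Lemma joins_neq f u w : joins f u w -> u != w.
Proof.
have := ends_loopless f.
by rewrite /joins => + /orP [] /andP [] /eqP e1 /eqP e2; rewrite e1 e2 // eq_sym.
Qed.

Lemma incident_joins f u w v : joins f u w -> inc v f -> v = u \/ v = w.
Proof.
by rewrite /joins /incident => /orP [] /andP [] /eqP -> /eqP -> /orP [] /eqP ->; auto.
Qed.

Lemma joins_uniq f u w w' : joins f u w -> joins f u w' -> w = w'.
Proof.
move=> j1 j2; have n1 := joins_neq j1; have n2 := joins_neq j2.
move: j1 j2 n1 n2; rewrite /joins.
by case: (ends f) => a b /= /orP [] /andP [] /eqP -> /eqP -> /orP [] /andP []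
  /eqP // e1 /eqP e2; rewrite ?e1 ?e2 ?eqxx.
Qed.

Lemma joins_other_end f v : inc v f -> joins f v (other_end f v).
Proof.
rewrite /incident /other_end /joins; case: eqP => [-> | _] /=; first by rewrite !eqxx.
by move=> ->; rewrite eqxx.
Qed.

Lemma colors_atP (S : {set E}) (phi : E -> 'I_k) v c :
  reflect (exists2 f, f \in S & inc v f && (phi f == c)) (c \in colors_at S phi v).
Proof.
apply: (iffP imsetP) => [[f] | [f fS /andP [vf /eqP <-]]].
  by rewrite inE => /andP [fS vf] ->; exists f; rewrite // vf eqxx.
by exists f; rewrite // inE fS vf.
Qed.

Lemma missing_color_neq (S : {set E}) (phi : E -> 'I_k) v c g :
  c \notin colors_at S phi v -> g \in S -> inc v g -> c != phi g.
Proof.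
move=> c_miss gS vg; apply: contraNneq c_miss => ->.
by apply/colors_atP; exists g; rewrite // vg eqxx.
Qed.

Lemma card_colors_at (S : {set E}) (phi : E -> 'I_k) v :
  proper_coloring S phi -> #|colors_at S phi v| = deg_in S v.
Proof.
move=> phiP; apply: card_in_imset => f g; rewrite !inE => /andP [fS vf] /andP [gS vg].
exact: phiP vf vg.
Qed.

Lemma deg_in_setD1 (S : {set E}) e v :
  deg_in S v = (e \in S) && inc v e + deg_in (S :\ e) v.
Proof.
rewrite /deg_in (cardsD1 e) inE; congr (_ + _); apply: eq_card => f.
by rewrite !inE andbA.
Qed.

Lemma mult_in_setD1 (S : {set E}) e v w :
  mult_in S v w = (e \in S) && joins e v w + mult_in (S :\ e) v w.
Proof.
rewrite /mult_in (cardsD1 e) inE; congr (_ + _); apply: eq_card => f.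
by rewrite !inE andbA.
Qed.

Lemma mult_inC (S : {set E}) v w : mult_in S v w = mult_in S w v.
Proof. by apply: eq_card => f; rewrite !inE joinsC. Qed.

Lemma mult_in_le_max (S : {set E}) v w : mult_in S v w <= mult_max_in S v.
Proof. exact: leq_bigmax. Qed.

Lemma mult_max_in_le_deg_in (S : {set E}) v : mult_max_in S v <= deg_in S v.
Proof.
apply/bigmax_leqP => w _; apply/subset_leq_card/subsetP => f.
by rewrite !inE => /andP [-> /joins_incl].
Qed.

Lemma proper_extend (D : {set E}) x e y (phi : E -> 'I_k) c :
  e \in D -> joins e x y -> proper_coloring (D :\ e) phi ->
  c \notin colors_at (D :\ e) phi x -> c \notin colors_at (D :\ e) phi y ->
  proper_coloring D (fun g => if g == e then c else phi g).
Proof.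
move=> eD exy phiP cx cy.
have clash g v : g \in D -> g != e -> inc v e -> inc v g -> phi g = c -> False.
  move=> gD ge ve vg phig; have gDe : g \in D :\ e by rewrite in_setD1 ge.
  case: (incident_joins exy ve) vg => -> vg.
  - by move/colors_atP: cx; apply; exists g; rewrite // vg phig /=.
  - by move/colors_atP: cy; apply; exists g; rewrite // vg phig /=.
move=> f g v fD gD vf vg.
case: eqP => [fe | /eqP fe]; case: eqP => [ge | /eqP ge].
- by rewrite fe ge.
- by move=> h; case: (clash g v gD ge); rewrite -?fe ?h.
- by move=> h; case: (clash f v fD fe); rewrite -?ge ?h.
- by apply: (phiP f g v); rewrite // in_setD1 ?fe ?ge.
Qed.

(* Recolor [e] with the color of [f], which becomes the uncolored edge. *)
Definition fan_shift (phi : E -> 'I_k) e f : E -> 'I_k :=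
  fun g => if g == e then phi f else phi g.

Lemma proper_fan_shift (D : {set E}) x e y f (phi : E -> 'I_k) :
  joins e x y -> proper_coloring (D :\ e) phi ->
  f \in D :\ e -> inc x f -> phi f \notin colors_at (D :\ e) phi y ->
  proper_coloring (D :\ f) (fan_shift phi e f).
Proof.
move=> exy phiP fDe xf fy.
have sub_De h : h \in D :\ f -> h != e -> h \in D :\ e.
  by rewrite !in_setD1 => /andP [_ ->] ->.
have clash h v : h \in D :\ f -> h != e -> inc v e -> inc v h -> phi f = phi h -> False.
  move=> hDf he ve vh phifh; have hDe := sub_De h hDf he.
  case: (incident_joins exy ve) vh => -> vh.
  - have fh := phiP _ _ _ fDe hDe xf vh phifh.
    by move: hDf; rewrite -fh in_setD1 eqxx.
  - by move: (missing_color_neq fy hDe vh); rewrite phifh eqxx.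
move=> g h v gDf hDf vg vh; rewrite /fan_shift.
case: eqP => [ge | /eqP ge]; case: eqP => [he | /eqP he].
- by rewrite ge he.
- by move=> q; case: (clash h v hDf he); rewrite -?ge ?q.
- by move=> q; case: (clash g v gDf ge); rewrite -?he ?q.
- exact: phiP (sub_De g gDf ge) (sub_De h hDf he) vg vh.
Qed.

Lemma missing_fan_shift (D : {set E}) e f (phi : E -> 'I_k) u c :
  c \notin colors_at (D :\ e) phi u -> (inc u e -> c != phi f) ->
  c \notin colors_at (D :\ f) (fan_shift phi e f) u.
Proof.
move=> c_miss ce; apply/colors_atP => [[g gDf /andP [ug /eqP]]]; rewrite /fan_shift.
case: eqP => [ge | /eqP ge] cg.
  by rewrite -ge in ce; move/(_ ug): ce; rewrite cg eqxx.
move/colors_atP: c_miss; apply; exists g; last by rewrite ug cg eqxx.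
by move: gDf; rewrite !in_setD1 ge => /andP [_ ->].
Qed.

(* Steps of Vizing's fan at [x] for the uncolored edge [e]. *)
Definition fan_step (D : {set E}) x e (phi : E -> 'I_k) : rel V :=
  fun u w => [exists g in D :\ e, joins g x w && (phi g \notin colors_at (D :\ e) phi u)].

Lemma fan_stepP (D : {set E}) x e phi u w :
  reflect (exists2 g, g \in D :\ e & joins g x w && (phi g \notin colors_at (D :\ e) phi u))
    (fan_step D x e phi u w).
Proof.
apply: (iffP existsP) => [[g /andP [gDe H]] | [g gDe H]]; first by exists g.
by exists g; rewrite gDe.
Qed.

Lemma fan_step_neq D x e phi u w : fan_step D x e phi u w -> w != x.
Proof. by case/fan_stepP => g _ /andP [/joins_neq]; rewrite eq_sym. Qed.

Lemma path_fan_step_neq D x e phi u s :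
  path (fan_step D x e phi) u s -> all (fun w => w != x) s.
Proof.
elim: s u => [|w s IHs] u //= /andP [uw ws].
by rewrite (fan_step_neq uw) (IHs _ ws).
Qed.

Lemma exists_missing_color (S : {set E}) (phi : E -> 'I_k) v :
  deg_in S v < k -> exists c, c \notin colors_at S phi v.
Proof.
move=> deg_lt; case: (pickP (fun c => c \notin colors_at S phi v)) => [c | all_used].
  by exists c.
have : #|[set: 'I_k]| <= #|colors_at S phi v|.
  by apply/subset_leq_card/subsetP => c _; move/negbFE: (all_used c).
rewrite cardsT card_ord => /leq_trans /(_ (leq_imset_card _ _)).
by rewrite leqNgt deg_lt.
Qed.

Section KempeChain.
Variables (S : {set E}) (phi : E -> 'I_k) (a b : 'I_k) (x : V).
Hypothesis phiP : proper_coloring S phi.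

Definition kempe_rel : rel V :=
  fun u w => [exists f in S, joins f u w && ((phi f == a) || (phi f == b))].

Definition kempe_chain : pred V := connect kempe_rel x.

Definition kempe_swap (f : E) : 'I_k :=
  if (f \in S) && kempe_chain (ends f).1 then tperm a b (phi f) else phi f.

Lemma kempe_rel_sym : symmetric kempe_rel.
Proof.
by move=> u w; apply/existsP/existsP => [] [f /andP [fS /andP [j c]]]; exists f;
  rewrite fS -joinsC j c.
Qed.

Lemma kempe_swap_at f v :
  f \in S -> inc v f -> kempe_swap f = if kempe_chain v then tperm a b (phi f) else phi f.
Proof.
move=> fS vf; rewrite /kempe_swap fS /=.
case: (boolP ((phi f == a) || (phi f == b))) => [ab | ]; last first.
  by rewrite negb_or => /andP [fa fb]; rewrite tpermD 1?eq_sym // !if_same.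
have rel_ends : kempe_rel (ends f).1 (ends f).2.
  by apply/existsP; exists f; rewrite fS /joins !eqxx.
have chain_sym := sym_connect_sym kempe_rel_sym.
move: vf; rewrite /incident => /orP [] /eqP <- //.
congr (if _ then _ else _); rewrite /kempe_chain; apply/idP/idP => xv.
- exact: connect_trans xv (connect1 rel_ends).
- by apply: connect_trans xv _; rewrite chain_sym; apply: connect1.
Qed.

Lemma proper_kempe_swap : proper_coloring S kempe_swap.
Proof.
move=> f g v fS gS vf vg; rewrite (kempe_swap_at fS vf) (kempe_swap_at gS vg).
by case: ifP => _ fg; apply: (phiP fS gS vf vg); first exact: perm_inj fg.
Qed.

Lemma colors_at_kempe_swap c v :
  (c \in colors_at S kempe_swap v) =
  ((if kempe_chain v then tperm a b c else c) \in colors_at S phi v).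
Proof.
apply/colors_atP/colors_atP => [[f fS /andP [vf /eqP <-]] | [f fS /andP [vf /eqP fc]]];
  exists f => //; rewrite vf (kempe_swap_at fS vf) /=.
  by case: (kempe_chain v); rewrite ?tpermK ?eqxx.
by move: fc; case: (kempe_chain v) => ->; rewrite ?tpermK ?eqxx.
Qed.

Definition color_nbr (c : 'I_k) (v : V) : V :=
  odflt v [pick w | [exists f in S, joins f v w && (phi f == c)]].

Lemma color_nbr_eq c v w f : f \in S -> joins f v w -> phi f = c -> color_nbr c v = w.
Proof.
move=> fS fvw fc; rewrite /color_nbr; case: pickP => /= [w' | none]; last first.
  by move: (none w) => /existsP []; exists f; rewrite fS fvw fc eqxx.
case/existsP => f' /and3P [f'S f'vw' /eqP f'c].
have f'f : f' = f by apply: phiP (joins_incl f'vw') (joins_incl fvw) _; rewrite // fc f'c.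
by rewrite f'f in f'vw'; apply: joins_uniq f'vw' fvw.
Qed.

Lemma color_nbr_id c v : c \notin colors_at S phi v -> color_nbr c v = v.
Proof.
move=> c_miss; rewrite /color_nbr; case: pickP => [w /existsP [f] | //] /=.
case/and3P => fS fvw /eqP fc.
by move/colors_atP: c_miss => []; exists f; rewrite // (joins_incl fvw) fc eqxx.
Qed.

Lemma color_nbrK c : involutive (color_nbr c).
Proof.
move=> v; rewrite {2}/color_nbr; case: pickP => /= [w /existsP [f] | none].
  by case/and3P => fS fvw /eqP fc; apply: (color_nbr_eq fS _ fc); rewrite joinsC.
rewrite /color_nbr; case: pickP => [w /existsP [f] | //] /=.
case/and3P => fS fvw /eqP fc.
by move: (none w) => /existsP []; exists f; rewrite fS fvw fc eqxx.
Qed.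

Lemma kempe_rel_color_nbr u w :
  kempe_rel u w -> w = color_nbr a u \/ w = color_nbr b u.
Proof.
case/existsP => f /and3P [fS fuw /orP [] /eqP fc].
- by left; rewrite (color_nbr_eq fS fuw fc).
- by right; rewrite (color_nbr_eq fS fuw fc).
Qed.

(* An (a,b)-Kempe chain is a path or a cycle, so it has at most two ends. *)
Lemma kempe_chain_missing_uniq y z :
  b \notin colors_at S phi x -> a \notin colors_at S phi y -> a \notin colors_at S phi z ->
  kempe_chain y -> kempe_chain z -> y = z.
Proof.
move=> bx ay az xy xz.
apply: (connect_involutions_fixpoint_uniq (color_nbrK a) (color_nbrK b)
  (color_nbr_id bx) kempe_rel_color_nbr xy xz); exact: color_nbr_id.
Qed.

End KempeChain.

Section Fan.
Variables (D : {set E}) (x : V).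

Lemma fan_neq_center e y (phi : E -> 'I_k) w :
  y != x -> connect (fan_step D x e phi) y w -> w != x.
Proof.
by move=> yx; apply: (connect_closed (P := fun w => w != x)) yx => u v _ /fan_step_neq.
Qed.

Lemma fan_path_notin_edge e y y' (phi : E -> 'I_k) p u :
  joins e x y -> y' != x -> path (fan_step D x e phi) y' p -> y \notin y' :: p ->
  u \in y' :: p -> ~~ inc u e.
Proof.
move=> exy y'x y'p_path y_notin u_in; apply/negP => /(incident_joins exy) [] ux.
- move: u_in; rewrite ux inE eq_sym (negbTE y'x) /=.
  by move/allP: (path_fan_step_neq y'p_path) => /[apply]; rewrite eqxx.
- by move: y_notin; rewrite -ux u_in.
Qed.

Lemma path_fan_shift e y f y' (phi : E -> 'I_k) p :
  joins e x y -> f \in D :\ e -> joins f x y' ->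
  path (fan_step D x e phi) y' p -> uniq (y :: y' :: p) ->
  path (fan_step D x f (fan_shift phi e f)) y' p.
Proof.
move=> exy fDe fxy' y'p_path /andP [y_notin /andP [y'p _]].
have y'x : y' != x by rewrite eq_sym (joins_neq fxy').
have notin_e := fan_path_notin_edge exy y'x y'p_path y_notin.
apply: (sub_path_belast (P := mem (y' :: p)) (Q := mem p)) y'p_path; first last.
- by apply/allP.
- by apply/allP => u /mem_belast.
move=> u w u_in w_in /fan_stepP [g gDe /andP [gxw gu]]; apply/fan_stepP; exists g.
  have gf : g != f.
    by apply: contraNneq y'p => gf; rewrite gf in gxw; rewrite (joins_uniq fxy' gxw).
  by move: gDe; rewrite !in_setD1 gf => /andP [_ ->].
rewrite gxw /fan_shift; move: gDe; rewrite in_setD1 => /andP [/negbTE -> _].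
by apply: missing_fan_shift => // /(negP (notin_e _ u_in)).
Qed.

Lemma fan_shift_connect e y f y' (phi : E -> 'I_k) w :
  e \in D -> joins e x y -> proper_coloring (D :\ e) phi ->
  f \in D :\ e -> joins f x y' -> phi f \notin colors_at (D :\ e) phi y ->
  connect (fan_step D x e phi) y w ->
  connect (fan_step D x f (fan_shift phi e f)) y' w.
Proof.
move=> eD exy phiP fDe fxy' fy yw.
have [fe fD] : f != e /\ f \in D by apply/andP; rewrite -in_setD1.
have y'x : y' != x by rewrite eq_sym (joins_neq fxy').
have y'y : y' != y.
  by apply: contraNneq fy => <-; apply/colors_atP; exists f; rewrite // (joins_incr fxy') eqxx.
set fan' := fan_step D x f (fan_shift phi e f).
have start : fan' y' y.
  apply/fan_stepP; exists e; first by rewrite in_setD1 eq_sym fe.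
  rewrite exy /fan_shift eqxx /=; apply/colors_atP => [[g gDf /andP [y'g /eqP]]].
  case: eqP => [ge | /eqP ge] gf.
    rewrite ge in y'g.
    by case: (incident_joins exy y'g) => /eqP; rewrite ?(negbTE y'x) ?(negbTE y'y).
  have gDe : g \in D :\ e by move: gDf; rewrite !in_setD1 ge => /andP [_ ->].
  by move: gDf; rewrite (phiP _ _ _ gDe fDe y'g (joins_incr fxy') gf) in_setD1 eqxx.
have step u v : connect fan' y' u -> fan_step D x e phi u v -> connect fan' y' v.
  move=> y'u /fan_stepP [g gDe /andP [gxv gu]].
  case: (eqVneq g f) => [gf | gf]; first by rewrite gf in gxv; rewrite -(joins_uniq fxy' gxv).
  apply: connect_trans y'u (connect1 _); apply/fan_stepP; exists g.
    by move: gDe; rewrite !in_setD1 gf => /andP [_ ->].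
  have /setD1P [ge _] := gDe; rewrite gxv /fan_shift (negbTE ge).
  apply: missing_fan_shift => // _; apply: contra_neq gf.
  exact: phiP gDe fDe (joins_incl gxv) (joins_incl fxy').
exact: (connect_closed (P := connect fan' y')) step (connect1 start) yw.
Qed.

Hypothesis D_uncolorable : forall phi, ~ proper_coloring D phi.

Lemma no_missing_at_both_ends e y (phi : E -> 'I_k) c :
  e \in D -> joins e x y -> proper_coloring (D :\ e) phi ->
  c \notin colors_at (D :\ e) phi x -> c \notin colors_at (D :\ e) phi y -> False.
Proof. by move=> eD exy phiP cx cy; apply: D_uncolorable (proper_extend eD exy phiP cx cy). Qed.

Lemma fan_path_center_missing e y (phi : E -> 'I_k) p c :
  e \in D -> joins e x y -> proper_coloring (D :\ e) phi ->
  path (fan_step D x e phi) y p -> uniq (y :: p) ->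
  c \notin colors_at (D :\ e) phi x -> c \notin colors_at (D :\ e) phi (last y p) -> False.
Proof.
elim: p e y phi => [|y' p IHp] e y phi eD exy phiP /=.
  by move=> _ _; apply: no_missing_at_both_ends eD exy phiP.
move=> /andP [/fan_stepP [f fDe /andP [fxy' fy]] y'p_path] yp_uniq cx c_last.
have /setD1P [_ fD] := fDe.
have y'x : y' != x by rewrite eq_sym (joins_neq fxy').
have /andP [y_notin y'p_uniq] := yp_uniq.
have notin_e := fan_path_notin_edge exy y'x y'p_path y_notin.
apply: (IHp f y' (fan_shift phi e f)) => //.
- exact: proper_fan_shift exy phiP fDe (joins_incl fxy') fy.
- exact: path_fan_shift exy fDe fxy' y'p_path yp_uniq.
- apply: missing_fan_shift => // _; exact: missing_color_neq cx fDe (joins_incl fxy').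
- by apply: missing_fan_shift => // /(negP (notin_e _ (mem_last _ _))).
Qed.

Lemma fan_center_missing e y (phi : E -> 'I_k) z c :
  e \in D -> joins e x y -> proper_coloring (D :\ e) phi ->
  connect (fan_step D x e phi) y z ->
  c \notin colors_at (D :\ e) phi x -> c \notin colors_at (D :\ e) phi z -> False.
Proof.
move=> eD exy phiP /connectP [p yp ->]; case/shortenP: yp => p' yp' yp'_uniq _.
exact: fan_path_center_missing eD exy phiP yp' yp'_uniq.
Qed.

Hypothesis deg_x_le : deg_in D x <= k.

(* [last y p] is the first fan vertex after [y] missing [a].  Swapping the (a,b)-chain
   through [x], where [b] is missing, makes [a] missing at [x]; the chain must contain [y]
   (else extend the coloring at [e]), hence not [last y p] (a chain has two ends), and
   then [y :: p] is still a fan path, contradicting [fan_center_missing]. *)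
Lemma fan_path_root_missing e y (phi : E -> 'I_k) a p :
  e \in D -> joins e x y -> proper_coloring (D :\ e) phi ->
  a \notin colors_at (D :\ e) phi y -> path (fan_step D x e phi) y p ->
  last y p != y -> a \notin colors_at (D :\ e) phi (last y p) ->
  all (fun u => (u == y) || (a \in colors_at (D :\ e) phi u)) (belast y p) -> False.
Proof.
move=> eD exy phiP ay yp zy az p_first; set S := D :\ e.
have [b bx] : exists b, b \notin colors_at S phi x.
  by apply: exists_missing_color; move: deg_x_le; rewrite (deg_in_setD1 _ e) eD (joins_incl exy).
set C := kempe_chain S phi a b x; set psi := kempe_swap S phi a b x.
have psiP : proper_coloring S psi by apply: proper_kempe_swap.
have Cx : C x by apply: connect0.
have ax : a \notin colors_at S psi x by rewrite colors_at_kempe_swap -/C Cx tpermL.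
case Cy : (C y); last first.
  by apply: (no_missing_at_both_ends eD exy psiP ax); rewrite colors_at_kempe_swap -/C Cy.
case Cz : (C (last y p)).
  by move/eqP: zy; apply; apply: (kempe_chain_missing_uniq phiP bx az ay).
apply: (fan_center_missing eD exy psiP _ ax (z := last y p)); last first.
  by rewrite colors_at_kempe_swap -/C Cz.
apply/connectP; exists p => //.
apply: (sub_path_belast (P := fun u => (u == y) || (a \in colors_at S phi u)) (Q := predT))
  p_first (all_predT _) yp.
move=> u w Pu _ /fan_stepP [g gS /andP [gxw gu]]; apply/fan_stepP; exists g => //.
rewrite gxw colors_at_kempe_swap -/C /psi (kempe_swap_at _ _ _ _ gS (joins_incl gxw)) -/C Cx.
case Cu : (C u); first by rewrite tpermK.
have au : a \in colors_at S phi u by case/orP: Pu => // /eqP uy; rewrite uy Cy in Cu.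
rewrite tpermD //; first by apply: contraNneq gu => <-.
exact: missing_color_neq bx gS (joins_incl gxw).
Qed.

Lemma fan_root_missing_uniq e y (phi : E -> 'I_k) a z :
  e \in D -> joins e x y -> proper_coloring (D :\ e) phi ->
  a \notin colors_at (D :\ e) phi y -> connect (fan_step D x e phi) y z ->
  z != y -> a \notin colors_at (D :\ e) phi z -> False.
Proof.
move=> eD exy phiP ay /connectP [p yp ->] zy az.
set first := fun u => (u != y) && (a \notin colors_at (D :\ e) phi u).
have first_p : has first p.
  apply/hasP; exists (last y p); last by rewrite /first zy az.
  by move: (mem_last y p); rewrite inE (negbTE zy).
move: yp; case/split_find: first_p => z' p1 p2 /andP [z'y az'] no_first.
rewrite cat_path => /andP [yp _].
apply: (fan_path_root_missing eD exy phiP ay yp); rewrite ?last_rcons //.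
rewrite belast_rcons /= eqxx /=; apply/allP => u u_in.
have : ~~ first u by apply: contra no_first => fu; apply/hasP; exists u.
by rewrite /first negb_and !negbK => /orP [] ->; rewrite ?orbT.
Qed.

Lemma fan_path_missing_disjoint e y (phi : E -> 'I_k) p z c :
  e \in D -> joins e x y -> proper_coloring (D :\ e) phi ->
  path (fan_step D x e phi) y p -> uniq (y :: p) ->
  connect (fan_step D x e phi) y z -> last y p != z ->
  c \notin colors_at (D :\ e) phi (last y p) -> c \notin colors_at (D :\ e) phi z -> False.
Proof.
elim: p e y phi => [|y' p IHp] e y phi eD exy phiP yp yp_uniq yz zlast c_last cz.
  by apply: (fan_root_missing_uniq eD exy phiP c_last yz _ cz); rewrite eq_sym.
case: (eqVneq z y) => [zy | zy].
  rewrite zy in zlast cz; apply: (fan_root_missing_uniq eD exy phiP cz _ zlast c_last).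
  by apply/connectP; exists (y' :: p).
move: yp => /= /andP [/fan_stepP [f fDe /andP [fxy' fy]] y'p_path].
have /setD1P [_ fD] := fDe.
have /andP [y_notin y'p_uniq] := yp_uniq.
have y'x : y' != x by rewrite eq_sym (joins_neq fxy').
have yx : y != x by rewrite eq_sym (joins_neq exy).
have notin_e := fan_path_notin_edge exy y'x y'p_path y_notin.
have z_notin_e : ~~ inc z e.
  apply/negP => /(incident_joins exy) [] /eqP; rewrite ?(negbTE zy) //.
  by rewrite (negbTE (fan_neq_center yx yz)).
apply: (IHp f y' (fan_shift phi e f) fD fxy' _ _ y'p_uniq _ zlast).
- exact: proper_fan_shift exy phiP fDe (joins_incl fxy') fy.
- exact: path_fan_shift exy fDe fxy' y'p_path yp_uniq.
- exact: fan_shift_connect eD exy phiP fDe fxy' fy yz.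
- by apply: missing_fan_shift => // /(negP (notin_e _ (mem_last _ _))).
- by apply: missing_fan_shift => // /(negP z_notin_e).
Qed.

Lemma fan_missing_disjoint e y (phi : E -> 'I_k) z z' c :
  e \in D -> joins e x y -> proper_coloring (D :\ e) phi ->
  connect (fan_step D x e phi) y z -> connect (fan_step D x e phi) y z' -> z != z' ->
  c \notin colors_at (D :\ e) phi z -> c \notin colors_at (D :\ e) phi z' -> False.
Proof.
move=> eD exy phiP /connectP [p yp ->]; case/shortenP: yp => p' yp' yp'_uniq _.
exact: fan_path_missing_disjoint eD exy phiP yp' yp'_uniq.
Qed.

(* Send [(z, c)], [c] missing at [z], to [(z', f)] with [f = xz'] the edge of color [c] at [x]:
   [f] exists by [fan_center_missing], and the map is injective by [fan_missing_disjoint]. *)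
Lemma fan_missing_count e y (phi : E -> 'I_k) :
  e \in D -> joins e x y -> proper_coloring (D :\ e) phi ->
  \sum_(z | connect (fan_step D x e phi) y z) #|~: colors_at (D :\ e) phi z| <=
  \sum_(z | connect (fan_step D x e phi) y z) mult_in (D :\ e) x z.
Proof.
move=> eD exy phiP; set fan := connect (fan_step D x e phi) y.
rewrite -(card_dep_pairs fan (fun z => ~: colors_at (D :\ e) phi z)).
rewrite -(card_dep_pairs fan (fun z => [set f in D :\ e | joins f x z])).
set Miss := [set _ | _]; set Edges := [set _ | _].
pose edge_of c := [pick f in D :\ e | inc x f && (phi f == c)].
have edge_ofP zc : zc \in Miss ->
    exists2 f, edge_of zc.2 = Some f & [&& f \in D :\ e, inc x f & phi f == zc.2].
  case: zc => z c; rewrite !inE /= => /andP [fan_z cz].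
  rewrite /edge_of; case: pickP => [f /andP [fDe /andP [xf fc]] | none].
    by exists f; rewrite ?fDe ?xf.
  case: (fan_center_missing eD exy phiP fan_z _ cz).
  by apply/colors_atP => [[f fDe /andP [xf fc]]]; move: (none f); rewrite /= fDe xf fc.
pose h zc := if edge_of zc.2 is Some f then (other_end f x, f) else (zc.1, e).
apply: leq_trans (subset_leq_card (_ : h @: Miss \subset Edges)).
  rewrite card_in_imset // => -[z c] [z' c'] zcM zc'M.
  have [f hf /and3P [_ _ /eqP fc]] := edge_ofP _ zcM.
  have [f' hf' /and3P [_ _ /eqP f'c]] := edge_ofP _ zc'M.
  rewrite /h hf hf' => -[_ ff']; rewrite ff' f'c /= in fc; rewrite fc.
  move: zcM zc'M; rewrite !inE /= fc => /andP [fz cz] /andP [fz' cz'].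
  case: (eqVneq z z') => [-> // | zz'].
  by case: (fan_missing_disjoint eD exy phiP fz fz' zz' cz cz').
apply/subsetP => _ /imsetP [[z c] zcM ->].
have [f hf /and3P [fDe xf /eqP fc]] := edge_ofP _ zcM.
move: zcM; rewrite /h hf !inE /= => /andP [fz cz].
rewrite -in_setD1 fDe joins_other_end // !andbT.
apply: connect_trans fz (connect1 _); apply/fan_stepP; exists f => //.
by rewrite joins_other_end //= fc.
Qed.

End Fan.

Definition tight (A : {set E}) (v : V) : bool := k.+1 <= deg_in A v + mult_max_in A v.

Definition admissible (A : {set E}) : Prop :=
  (forall v, deg_in A v + mult_max_in A v <= k.+1) /\
  (forall v w, tight A v -> tight A w -> 0 < mult_in A v w -> Gstar_adj ends v w).

Lemma admissible_subset (A B : {set E}) : B \subset A -> admissible A -> admissible B.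
Proof.
move=> BA [bound tight_adj].
have deg_le v : deg_in B v <= deg_in A v.
  by apply/subset_leq_card/subsetP => f; rewrite !inE => /andP [/(subsetP BA) -> ->].
have mult_le v w : mult_in B v w <= mult_in A v w.
  by apply/subset_leq_card/subsetP => f; rewrite !inE => /andP [/(subsetP BA) -> ->].
have sum_le v : deg_in B v + mult_max_in B v <= deg_in A v + mult_max_in A v.
  apply: leq_add (deg_le v) _; apply/bigmax_leqP => w _.
  exact: leq_trans (mult_le v w) (mult_in_le_max A v w).
split=> [v | v w tv tw vw]; first exact: leq_trans (sum_le v) (bound v).
apply: tight_adj; rewrite /tight.
- exact: leq_trans tv (sum_le v).
- exact: leq_trans tw (sum_le w).
- exact: leq_trans vw (mult_le v w).
Qed.

Lemma fan_vertex_bound (A : {set E}) x e (phi : E -> 'I_k) z :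
  (forall v, deg_in A v + mult_max_in A v <= k.+1) -> e \in A -> inc x e ->
  proper_coloring (A :\ e) phi -> connect (fan_step A x e phi) (other_end e x) z ->
  mult_in (A :\ e) x z + 2 * (z == other_end e x) <=
  #|~: colors_at (A :\ e) phi z| + (tight A z && (0 < mult_in A x z)).
Proof.
move=> bound eA xe phiP fan_z; set y := other_end e x in fan_z *.
have exy : joins e x y := joins_other_end xe.
have zx : z != x by apply: fan_neq_center fan_z; rewrite eq_sym (joins_neq exy).
have mult_xz : 0 < mult_in A x z.
  apply: (connect_closed (P := fun w => 0 < mult_in A x w)) fan_z.
    move=> u w _ /fan_stepP [g /setD1P [_ gA] /andP [gxw _]].
    by apply/card_gt0P; exists g; rewrite inE gA.
  by apply/card_gt0P; exists e; rewrite inE eA.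
have ez : inc z e = (z == y).
  apply/idP/eqP => [ze | ->]; last exact: joins_incr exy.
  by case: (incident_joins exy ze) => // /eqP; rewrite (negbTE zx).
have exz : joins e x z = (z == y) by apply/idP/eqP => [/(joins_uniq exy) | ->].
have missing_z : #|~: colors_at (A :\ e) phi z| + deg_in (A :\ e) z = k.
  by rewrite -(card_colors_at _ phiP) addnC cardsC card_ord.
have deg_z := deg_in_setD1 A e z; rewrite eA ez /= in deg_z.
have mult_z := mult_in_setD1 A e x z; rewrite eA exz /= in mult_z.
have mult_le : mult_in A x z <= mult_max_in A z by rewrite mult_inC mult_in_le_max.
have tight_z : deg_in A z + mult_max_in A z <= k + (tight A z && (0 < mult_in A x z)).
  rewrite mult_xz andbT /tight; have := bound z.
  by case: (leqP (deg_in A z + mult_max_in A z) k); lia.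
lia.
Qed.

Lemma fan_contradiction (A : {set E}) x e (phi : E -> 'I_k) :
  admissible A -> e \in A -> inc x e ->
  (forall z1 z2, tight A z1 -> 0 < mult_in A x z1 ->
                 tight A z2 -> 0 < mult_in A x z2 -> z1 = z2) ->
  proper_coloring (A :\ e) phi -> (forall psi, ~ proper_coloring A psi) -> False.
Proof.
move=> [bound _] eA xe x_leaf phiP A_uncolorable.
set y := other_end e x; have exy : joins e x y := joins_other_end xe.
have deg_x : deg_in A x <= k.
  have : 0 < mult_in A x y by apply/card_gt0P; exists e; rewrite inE eA.
  by move/leq_trans/(_ (mult_in_le_max A x y)); have := bound x; lia.
have missing_le := fan_missing_count A_uncolorable deg_x eA exy phiP.
set fan := connect (fan_step A x e phi) y in missing_le *.
have two_at_y : \sum_(z | fan z) 2 * (z == y) = 2.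
  rewrite (bigD1 y) /= ?eqxx; last exact: connect0.
  by rewrite big1 // => z /andP [_ /negbTE ->].
have one_tight : \sum_(z | fan z) (tight A z && (0 < mult_in A x z)) <= 1.
  by apply: sum_indicator_le1 => z1 z2 /andP [t1 m1] /andP [t2 m2]; apply: x_leaf.
have lhs : \sum_(z | fan z) (mult_in (A :\ e) x z + 2 * (z == y)) =
           \sum_(z | fan z) mult_in (A :\ e) x z + 2 by rewrite big_split two_at_y.
have rhs : \sum_(z | fan z) (#|~: colors_at (A :\ e) phi z| + (tight A z && (0 < mult_in A x z))) =
           \sum_(z | fan z) #|~: colors_at (A :\ e) phi z| +
           \sum_(z | fan z) (tight A z && (0 < mult_in A x z)) by rewrite big_split.
have := leq_sum (index_enum V) (fun z (fan_z : fan z) => fan_vertex_bound bound eA xe phiP fan_z).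
rewrite lhs rhs; lia.
Qed.

Lemma exists_leaf_edge (A : {set E}) :
  admissible A -> Gstar_no_long_cycle ends -> A != set0 ->
  exists x e, [/\ e \in A, inc x e &
    forall z1 z2, tight A z1 -> 0 < mult_in A x z1 ->
                  tight A z2 -> 0 < mult_in A x z2 -> z1 = z2].
Proof.
move=> [_ tight_adj] no_cycle /set0Pn [e0 e0A].
case: (pickP (tight A)) => [t0 t0_tight | no_tight]; last first.
  exists (ends e0).1, e0; split => //; first by rewrite /incident eqxx.
  by move=> z1 z2; rewrite no_tight.
pose R v w := [&& tight A v, tight A w & 0 < mult_in A v w].
have Rsym : symmetric R.
  by move=> v w; rewrite /R mult_inC andbA [tight A v && _]andbC -andbA.
have Rirr : irreflexive R.
  move=> v; apply/negP => /and3P [_ _ /card_gt0P [f]].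
  by rewrite inE => /andP [_ /joins_neq]; rewrite eqxx.
have no_R_cycle : ~ exists s, [/\ uniq s, 3 <= size s & cycle R s].
  case=> s [s_uniq s_size s_cycle]; apply: no_cycle; exists s; split => //.
  by apply: sub_cycle s_cycle => u w /and3P [tu tw uw]; apply: tight_adj.
have [x [x_tight x_leaf]] := acyclic_leaf t0 Rsym Rirr no_R_cycle.
have tight_x : tight A x by case: x_tight => [-> // | [w /and3P []]].
have : 0 < deg_in A x.
  by move: tight_x; rewrite /tight; have := mult_max_in_le_deg_in A x; lia.
case/card_gt0P => e; rewrite inE => /andP [eA xe].
by exists x, e; split => // z1 z2 t1 m1 t2 m2; apply: x_leaf; apply/and3P.
Qed.

Lemma admissible_colorable (A : {set E}) :
  0 < k -> Gstar_no_long_cycle ends -> admissible A -> exists phi, proper_coloring A phi.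
Proof.
move=> k_gt0 no_cycle; have [n] := ubnP #|A|; elim: n A => // n IHn A A_size A_adm.
case: (eqVneq A set0) => [-> | A_n0].
  by exists (fun=> Ordinal k_gt0) => f g v; rewrite inE.
have [x [e [eA xe x_leaf]]] := exists_leaf_edge A_adm no_cycle A_n0.
have [phi phiP] : exists phi, proper_coloring (A :\ e) phi.
  apply: IHn; last by apply: admissible_subset A_adm; apply: subD1set.
  by move: A_size; rewrite (cardsD1 e A) eA add1n ltnS.
apply: NNPP => A_uncolorable; apply: (fan_contradiction A_adm eA xe x_leaf phiP).
by move=> psi psiP; apply: A_uncolorable; exists psi.
Qed.

Lemma admissible_setT : Delta_mu ends <= k.+1 -> admissible setT.
Proof.
move=> Delta_le.
have deg_setT v : deg_in setT v = deg ends v by apply: eq_card => f; rewrite !inE.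
have mult_setT v w : mult_in setT v w = mult ends v w by apply: eq_card => f; rewrite !inE.
have mult_max_setT v : mult_max_in setT v = mult_max ends v.
  by apply: eq_bigr => w _; apply: mult_setT.
have le_Delta v : deg ends v + mult_max ends v <= Delta_mu ends by apply: leq_bigmax.
rewrite /admissible /tight; split => [v | v w]; rewrite !deg_setT !mult_max_setT.
  exact: leq_trans (le_Delta v) Delta_le.
rewrite mult_setT => tv tw vw; rewrite /Gstar_adj /in_Gstar vw andbT.
by have := le_Delta v; have := le_Delta w; move: tv tw; lia.
Qed.

End EdgeColoring.

Theorem mainTheorem5 (V E : finType) (ends : E -> V * V) (k : nat) :
  loopless ends ->
  1 <= k ->
  Delta_mu ends - 1 <= k ->
  Gstar_no_long_cycle ends ->
  edge_colorable ends k.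
Proof.
move=> ends_loopless k_gt0 Delta_le no_cycle.
have [|phi phiP] := admissible_colorable ends_loopless k_gt0 no_cycle (admissible_setT _).
  by move: Delta_le; lia.
exists phi => f g fg [v /andP [vf vg]]; apply: contraNneq fg => fg_col.
by apply/eqP; apply: (phiP f g v); rewrite ?inE.
Qed.
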